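(* Let $F=\frac1{16}\begin{pmatrix}1&2&1\\2&4&2\\1&2&1\end{pmatrix}$ (Gaussian blur filter). Then the equation $F*X=B$ with the zero boundary condition, for unknown $X\in\mathbb{R}^{m\times n}$, has a unique solution for every $B\in\mathbb{R}^{m\times n}$ (for all $m,n\in\mathbb{N}$).
   Context: For $F=[f_{ij}]\in\mathbb{R}^{3\times3}$ and $X=[x_{ij}]\in\mathbb{R}^{m\times n}$, the convolution $F*X\in\mathbb{R}^{m\times n}$ is defined by $[F*X]_{ij}=\sum_{l_1=1}^3\sum_{l_2=1}^3 f_{l_1l_2}\,x_{i-l_1+2,\,j-l_2+2}$ for $1\le i\le m$, $1\le j\le n$, where under the zero boundary condition all values $x_{ij}$ with $i\in\{0,m+1\}$ or $j\in\{0,n+1\}$ are $0$. *)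

From mathcomp Require Import all_boot all_order all_algebra.
From mathcomp Require Import Rstruct.
Set Implicit Arguments. Unset Strict Implicit. Unset Printing Implicit Defensive.
Import GRing.Theory Num.Theory.
Local Open Scope ring_scope.

Notation real := Rdefinitions.R.

(* Entry of X at (0-based, integer) position (a, b), with the zero boundary
   condition: 0 whenever the position lies outside the m x n grid. *)
Definition xz (m n : nat) (X : 'M[real]_(m, n)) (a b : int) : real :=
  match a, b with
  | Posz a', Posz b' =>
      match @insub nat (fun k => (k < m)%N) 'I_m a',
            @insub nat (fun k => (k < n)%N) 'I_n b' with
      | Some i, Some j => X i j
      | _, _ => 0
      end
  | _, _ => 0
  end.

(* Convolution with a 3x3 filter F (indices l1, l2 in {0,1,2} correspond to
   the paper's 1,2,3), zero boundary condition:
   [F*X]_{ij} = sum_{l1,l2} f_{l1 l2} x_{i - l1 + 2, j - l2 + 2} (1-based),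
   i.e. in 0-based indices x_{i + 1 - l1, j + 1 - l2}. *)
Definition conv (m n : nat) (F : 'M[real]_3) (X : 'M[real]_(m, n)) : 'M[real]_(m, n) :=
  \matrix_(i < m, j < n)
     \sum_(l1 < 3) \sum_(l2 < 3)
        F l1 l2 * xz X (Posz i + 1 - Posz l1) (Posz j + 1 - Posz l2).

Definition gauss_filter : 'M[real]_3 :=
  \matrix_(i < 3, j < 3)
    ((if i == 1 :> nat then 2 else 1) * (if j == 1 :> nat then 2 else 1)) / 16.

From HB Require Import structures.
From mathcomp Require Import all_boot all_order all_algebra.
From mathcomp Require Import Rstruct zify ring.
Set Implicit Arguments. Unset Strict Implicit. Unset Printing Implicit Defensive.
Import Order.TTheory GRing.Theory Num.Theory.
Local Open Scope ring_scope.
Arguments xz : simpl never.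

(* The Gaussian filter is separable, F = u u^T / 16 with u = (1, 2, 1), so F*X
   applies the one-dimensional stencil x_(a-1) + 2 x_a + x_(a+1) along the rows
   and then along the columns.  Under the zero boundary condition this stencil
   has trivial kernel on a segment of length k: the recurrence forces
   x_j = (-1)^j (j + 1) x_0, and x_k = 0 then gives x_0 = 0.  Hence X |-> F*X is
   an injective linear endomorphism of a finite-dimensional space, hence
   bijective. *)

Lemma linear_ker0_exists_unique (K : fieldType) (vT : vectType K)
    (f : {linear vT -> vT}) :
  (forall x, f x = 0 -> x = 0) -> forall b, exists! x, f x = b.
Proof.
move=> f_eq0 b.
have ker0 : lker (linfun f) == 0%VS.
  by apply/lker0P => x y; rewrite !lfunE; apply: raddf_inj.
exists ((linfun f)^-1%VF b); split; first by rewrite -lfunE lker0_lfunVK.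
by move=> x <-; rewrite -[f x]lfunE lker0_lfunK.
Qed.

Definition stencil121 (R : pzRingType) (f : int -> R) (a : int) : R :=
  f (a - 1) + 2 * f a + f (a + 1).

Section Stencil121.
Variables (R : numDomainType) (f : int -> R) (k : nat).
Hypothesis stencil_eq0 : forall j : nat, (j < k)%N -> stencil121 f j = 0.

Lemma stencil121_eq0_closed_form : f (-1) = 0 ->
  forall j : nat, (j < k)%N ->
    f j = (-1) ^+ j * j.+1%:R * f 0 /\ f j.+1 = (-1) ^+ j.+1 * j.+2%:R * f 0.
Proof.
move=> f_neg1; elim=> [|j IHj] lt_jk; have := stencil_eq0 lt_jk; rewrite /stencil121.
  rewrite sub0r f_neg1 !add0r => E.
  split; first by rewrite expr0 mul1r mul1r.
  have -> : f 1 = - (2 * f 0) by apply/eqP; rewrite -addr_eq0 addrC E.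
  by rewrite expr1; ring.
rewrite (_ : Posz j.+1 - 1 = j); last by lia.
rewrite (_ : Posz j.+1 + 1 = j.+2); last by lia.
have [-> ->] := IHj (ltnW lt_jk).
move=> E; split=> //.
have -> : f j.+2 = - ((-1) ^+ j * j.+1%:R * f 0 + 2 * ((-1) ^+ j.+1 * j.+2%:R * f 0)).
  by apply/eqP; rewrite -addr_eq0 addrC E.
rewrite !exprS -!natr1; ring.
Qed.

Lemma stencil121_eq0_support :
  (forall a, (a < 0) || (Posz k <= a) -> f a = 0) -> forall a, f a = 0.
Proof.
move=> f_out a.
have [k0|k_gt0] := posnP k; first by apply: f_out; rewrite k0; case: a.
have closed_form := stencil121_eq0_closed_form (f_out (-1) isT).
have f0 : f 0 = 0.
  have lt_pred_k : (k.-1 < k)%N by rewrite ltn_predL.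
  have [_] := closed_form k.-1 lt_pred_k.
  rewrite prednK // f_out; last by rewrite lexx orbT.
  by move=> /esym/eqP; rewrite !mulf_eq0 signr_eq0 pnatr_eq0 => /eqP.
case: a => [j|j]; last exact: f_out.
have [lt_jk|le_kj] := ltnP j k; last by apply: f_out; rewrite lez_nat le_kj orbT.
by have [-> _] := closed_form j lt_jk; rewrite f0 mulr0.
Qed.

End Stencil121.

Section ZeroBoundary.
Variables (m n : nat).
Implicit Types (X Y : 'M[real]_(m, n)) (a b : int).

Lemma xz_ord X (i : 'I_m) (j : 'I_n) : xz X i j = X i j.
Proof. by rewrite /xz !valK. Qed.

Lemma xz_out_row X a b : (a < 0) || (Posz m <= a) -> xz X a b = 0.
Proof.
case: a => [a|a] //=; rewrite lez_nat /xz => a_ge_m.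
by case: b => // b; rewrite insubF // ltnNge a_ge_m.
Qed.

Lemma xz_out_col X a b : (b < 0) || (Posz n <= b) -> xz X a b = 0.
Proof.
rewrite /xz; case: a => // a; case: b => //= b; rewrite lez_nat => b_ge_n.
by case: insub => // i; rewrite insubF // ltnNge b_ge_n.
Qed.

Lemma xz_linearP (c : real) X Y a b :
  xz (c *: X + Y) a b = c * xz X a b + xz Y a b.
Proof.
rewrite /xz; case: a => [a|a]; last by rewrite mulr0 addr0.
case: b => [b|b]; last by rewrite mulr0 addr0.
case: insub => [i|]; last by rewrite mulr0 addr0.
by case: insub => [j|]; rewrite ?mxE // mulr0 addr0.
Qed.

Lemma conv_is_linear (F : 'M[real]_3) : linear (@conv m n F).
Proof.
move=> c X Y; apply/matrixP => i j; rewrite !mxE mulr_sumr -big_split.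
apply: eq_bigr => l1 _; rewrite mulr_sumr -big_split.
by apply: eq_bigr => l2 _; rewrite /= xz_linearP mulrDr mulrCA.
Qed.

End ZeroBoundary.

HB.instance Definition _ m n F :=
  GRing.isLinear.Build real 'M[real]_(m, n) 'M[real]_(m, n) *:%R
    (@conv m n F) (@conv_is_linear m n F).

(* The division by 16 in [gauss_filter] is in the matrix ring, i.e. a product
   with the inverse of the scalar matrix 16. *)
Lemma gauss_filterE (i j : 'I_3) :
  gauss_filter i j =
    (if i == 1 :> nat then 2 else 1) * (if j == 1 :> nat then 2 else 1) / 16.
Proof.
have h16 : (16 : 'M[real]_3) = (16 : real)%:M by rewrite raddfMn.
by rewrite /gauss_filter h16 -[_^-1]/(invmx _) invmx_scalar -mulmxE mul_mx_scalar !mxE mulrC.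
Qed.

Lemma conv_gauss_filterE m n (X : 'M[real]_(m, n)) (i : 'I_m) (j : 'I_n) :
  conv gauss_filter X i j = stencil121 (fun a => stencil121 (xz X a) j) i / 16.
Proof.
have shift0 (a : int) : a + 1 - 0%:Z = a + 1 by rewrite subr0.
have shift1 (a : int) : a + 1 - 1%:Z = a by rewrite addrK.
have shift2 (a : int) : a + 1 - 2%:Z = a - 1 by lia.
rewrite mxE !big_ord_recr !big_ord0 /= !gauss_filterE /= !shift0 !shift1 !shift2.
by rewrite /stencil121; ring.
Qed.

Lemma conv_gauss_filter_eq0 m n (X : 'M[real]_(m, n)) :
  conv gauss_filter X = 0 -> X = 0.
Proof.
move=> convX0.
have row_stencil_eq0 (j : 'I_n) : forall a, stencil121 (xz X a) j = 0.
  apply: (stencil121_eq0_support (k := m)) => [i lt_im | a a_out].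
    have := conv_gauss_filterE X (Ordinal lt_im) j; rewrite convX0 mxE.
    by move/eqP; rewrite eq_sym mulf_eq0 invr_eq0 pnatr_eq0 orbF => /eqP.
  by rewrite /stencil121 !xz_out_row // mulr0 !addr0.
apply/matrixP => i j; rewrite mxE -xz_ord; move: (Posz j).
apply: (stencil121_eq0_support (k := n)) => [j' lt_jn | b b_out].
  exact: (row_stencil_eq0 (Ordinal lt_jn)).
exact: xz_out_col.
Qed.

Theorem corollary4 (m n : nat) (B : 'M[real]_(m, n)) :
  exists! X : 'M[real]_(m, n), conv gauss_filter X = B.
Proof. exact: linear_ker0_exists_unique (@conv_gauss_filter_eq0 m n) B. Qed.
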